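(* For every integer $j$ with $j\geq 20$ or $j\in\{15,16,17\}$, we have $R_1^{\mathcal{BIP}}(4,j)=2j-1$, where $\mathcal{BIP}$ is the class of bipartite graphs.
   Context: All graphs are finite and simple. For a graph $G$ and a nonnegative integer $k$, a $k$-sparse $j$-set is a set of $j$ vertices of $G$ inducing a subgraph of maximum degree at most $k$; a $k$-dense $i$-set is a set of $i$ vertices of $G$ that is $k$-sparse in the complement of $G$. For a graph class $\mathcal{G}$, $R_k^{\mathcal{G}}(i,j)$ is the smallest natural number $n$ such that every graph on $n$ vertices in $\mathcal{G}$ has either a $k$-dense $i$-set or a $k$-sparse $j$-set. *)

From mathcomp Require Import all_boot.
Set Implicit Arguments. Unset Strict Implicit. Unset Printing Implicit Defensive.

Definition simple_graph (T : finType) (e : rel T) : Prop :=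
  irreflexive e /\ symmetric e.

Definition compl_graph (T : finType) (e : rel T) : rel T :=
  fun x y => (x != y) && ~~ e x y.

Definition k_sparse (T : finType) (e : rel T) (k : nat) (S : {set T}) : bool :=
  [forall x in S, #|[set y in S | e x y]| <= k].

Definition k_dense (T : finType) (e : rel T) (k : nat) (S : {set T}) : bool :=
  k_sparse (compl_graph e) k S.

Definition bipartite (T : finType) (e : rel T) : Prop :=
  exists c : T -> bool, forall x y, e x y -> c x != c y.

Definition bip_ramsey_prop (k i j n : nat) : Prop :=
  forall e : rel 'I_n, simple_graph e -> bipartite e ->
    (exists S : {set 'I_n}, #|S| = i /\ k_dense e k S) \/
    (exists S : {set 'I_n}, #|S| = j /\ k_sparse e k S).

Definition is_bip_ramsey (k i j n : nat) : Prop :=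
  bip_ramsey_prop k i j n /\ forall m, m < n -> ~ bip_ramsey_prop k i j m.

From mathcomp Require Import all_boot zify.
Set Implicit Arguments. Unset Strict Implicit. Unset Printing Implicit Defensive.

(* Upper bound: a bipartite graph on 2j-1 vertices has a colour class with j
   vertices, and a colour class is independent.
   Lower bound, with n = j-1: in a bipartite graph every vertex of a 1-dense
   4-set has two neighbours in it, which forces a K_{2,2}.  So it suffices to
   give a K_{2,2}-free bipartite graph on 2n vertices whose 1-sparse sets have
   at most n vertices; its induced subgraphs on fewer vertices then work too.
   Take a disjoint union of incidence graphs of configurations with t = 7, 8, 12
   and 13 lines (the Fano plane, the Moebius-Kantor configuration, PG(2,3)
   minus an anti-flag, and PG(2,3)): the sparse bounds add up over the union,
   n is a sum of such t when n is 14, 15, 16 or at least 19, and for a single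
   configuration both properties are checked by computation. *)

Definition K22_free (T : eqType) (e : rel T) : Prop :=
  forall u v w w', u != v -> w != w' -> e u w -> e u w' -> e v w -> e v w' -> False.

Definition two_colourable (T : Type) (e : rel T) : Prop :=
  exists c : T -> bool, forall x y, e x y -> c x != c y.

Section FiniteGraph.
Variables (T : finType) (e : rel T).

Lemma k_sparse_independent k (S : {set T}) :
  {in S &, forall x y, ~~ e x y} -> k_sparse e k S.
Proof.
move=> indS; apply/forall_inP => x xS.
suff -> : [set y in S | e x y] = set0 by rewrite cards0.
by apply/setP => y; rewrite !inE; apply/andP => -[yS]; apply/negP/indS.
Qed.

Lemma bipartite_independent_set j :
  bipartite e -> 2 * j - 1 <= #|T| ->
  exists S : {set T}, #|S| = j /\ {in S &, forall x y, ~~ e x y}.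
Proof.
move=> [c ce] hT.
have [C [jC monoC]] : exists C : {set T}, j <= #|C| /\ {in C &, forall x y, c x = c y}.
  pose A := [set x | c x]; have cardA := cardsC A.
  have [jA | ltAj] := leqP j #|A|.
    by exists A; split=> // x y; rewrite !inE => -> ->.
  exists (~: A); split; first lia.
  by move=> x y; rewrite !inE => /negbTE -> /negbTE ->.
have /card_geqP [s [us sj sC]] := jC.
exists [set x in s]; split; first by rewrite cardsE (card_uniqP us).
move=> x y; rewrite !inE => xs ys; apply/negP => /ce.
by rewrite (monoC x y (sC _ xs) (sC _ ys)) eqxx.
Qed.

Lemma k_dense_card_nbrs k (S : {set T}) x :
  k_dense e k S -> x \in S -> #|S| <= #|[set y in S | e x y]| + k.+1.
Proof.
move=> /forall_inP /(_ x) dS xS; have {dS} := dS xS.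
set C := [set y in S | _] => leCk.
have coverS : S \subset [set x] :|: C :|: [set y in S | e x y].
  apply/subsetP => y yS; rewrite !inE yS /compl_graph /=.
  by rewrite [y == x]eq_sym; case: (x == y); case: (e x y).
apply: leq_trans (subset_leq_card coverS) _.
apply: leq_trans (leq_card_setU _ _) _; rewrite addnC leq_add2l.
by apply: leq_trans (leq_card_setU _ _) _; rewrite cards1 add1n ltnS.
Qed.

Lemma bipartite_4set_low_degree (S : {set T}) :
  bipartite e -> K22_free e -> #|S| = 4 ->
  exists2 x, x \in S & #|[set y in S | e x y]| <= 1.
Proof.
move=> [c ce] K22 S4.
have [/exists_inP // | ] := boolP [exists x in S, #|[set y in S | e x y]| <= 1].
rewrite negb_exists_in => /forall_inP deg2.
have {}deg2 x : x \in S -> 1 < #|[set y in S | e x y]| by move/deg2; rewrite -ltnNge.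
have [x0 x0S] : exists x, x \in S by apply/card_gt0P; rewrite S4.
(* Every vertex sees two vertices of the other colour class, so both classes
   have two vertices and together they span a K_{2,2}. *)
pose A := S :&: [set y | c y == c x0]; pose B := S :\: [set y | c y == c x0].
have nbr_other x : x \in S -> [set y in S | e x y] \subset S :&: [set y | c y != c x].
  by move=> xS; apply/subsetP => y; rewrite !inE eq_sym => /andP[-> /ce].
have nbrA x : x \in A -> [set y in S | e x y] \subset B.
  rewrite /A /B !inE => /andP[xS /eqP cx]; apply: subset_trans (nbr_other x xS) _.
  by apply/subsetP => y; rewrite !inE cx => /andP[-> ->].
have nbrB x : x \in B -> [set y in S | e x y] \subset A.
  rewrite /A /B !inE => /andP[/negbTE cx xS]; apply: subset_trans (nbr_other x xS) _.
  apply/subsetP => y; rewrite !inE => /andP[-> cyx] /=.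
  by move: cx cyx; case: (c x) (c y) (c x0) => [] [] [].
have x0A : x0 \in A by rewrite /A !inE x0S eqxx.
have gt1B := leq_trans (deg2 _ x0S) (subset_leq_card (nbrA _ x0A)).
have [y0 y0B] : exists y, y \in B by apply/card_gt0P; lia.
have y0S : y0 \in S by move: y0B; rewrite /B !inE => /andP[].
have gt1A := leq_trans (deg2 _ y0S) (subset_leq_card (nbrB _ y0B)).
have AB4 : #|A| + #|B| = 4 by rewrite cardsID.
have fullA x : x \in A -> [set y in S | e x y] = B.
  move=> xA; have xS : x \in S by move: xA; rewrite /A !inE => /andP[].
  by apply/eqP; rewrite eqEcard nbrA //=; apply: leq_trans (deg2 _ xS); lia.
have adjAB x y : x \in A -> y \in B -> e x y.
  by move=> xA; rewrite -(fullA x xA) inE => /andP[].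
have [x1 [x2 [x1A x2A ne12]]] := card_gt1P gt1A.
have [w1 [w2 [w1B w2B ne]]] := card_gt1P gt1B.
by case: (K22 _ _ _ _ ne12 ne); apply: adjAB.
Qed.

Lemma bipartite_4set_not_1_dense (S : {set T}) :
  bipartite e -> K22_free e -> #|S| = 4 -> ~~ k_dense e 1 S.
Proof.
move=> bip K22 S4; apply/negP => dS.
have [x xS lex] := bipartite_4set_low_degree bip K22 S4.
by have := k_dense_card_nbrs dS xS; rewrite S4; lia.
Qed.

Lemma card_set_count (P : pred T) (S : {set T}) :
  #|[set y in S | P y]| = count P (enum S).
Proof.
rewrite -size_filter -(card_uniqP (filter_uniq P (enum_uniq (mem S)))).
by apply: eq_card => y; rewrite !inE mem_filter mem_enum andbC.
Qed.

End FiniteGraph.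

Lemma bip_ramsey_prop_upper k i j : bip_ramsey_prop k i j (2 * j - 1).
Proof.
move=> e _ bip; right.
have [|S [Sj indS]] := bipartite_independent_set bip (j := j); first by rewrite card_ord.
by exists S; split; last exact: k_sparse_independent.
Qed.

Definition k_sparse_seq (e : rel nat) (k : nat) (s : seq nat) : bool :=
  all (fun x => count (e x) s <= k) s.

Definition sparse_bounded (e : rel nat) (k N b : nat) : Prop :=
  forall s, uniq s -> all (fun x => x < N) s -> k_sparse_seq e k s -> size s <= b.

Lemma count_gt1 (T : eqType) (P : pred T) (s : seq T) x y :
  x \in s -> y \in s -> x != y -> P x -> P y -> 1 < count P s.
Proof.
move=> xs ys xy Px Py; rewrite -size_filter.
apply: (@uniq_leq_size _ [:: x; y]); first by rewrite /= inE xy.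
by move=> z; rewrite !inE mem_filter => /orP[] /eqP ->; rewrite ?Px ?Py.
Qed.

Lemma count_le_uniq_sub (T : eqType) (P : pred T) (s1 s2 : seq T) :
  uniq s1 -> {subset s1 <= s2} -> count P s1 <= count P s2.
Proof.
move=> us1 s12; rewrite -!size_filter; apply: uniq_leq_size; first exact: filter_uniq.
by move=> x; rewrite !mem_filter => /andP[-> /s12].
Qed.

Section ShiftUnion.
Variables (w : nat) (e1 e2 : rel nat).

Definition shift_union : rel nat := fun u v =>
  if u < w then (v < w) && e1 u v else (w <= v) && e2 (u - w) (v - w).

Lemma shift_union_sym : symmetric e1 -> symmetric e2 -> symmetric shift_union.
Proof.
move=> s1 s2 u v; rewrite /shift_union.
by case: (ltnP u w) => hu; case: (ltnP v w) => hv //=; rewrite (s1, s2).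
Qed.

Lemma shift_union_irr : irreflexive e1 -> irreflexive e2 -> irreflexive shift_union.
Proof. by move=> i1 i2 u; rewrite /shift_union; case: ltnP; rewrite (i1, i2) andbF. Qed.

Lemma shift_union_colourable :
  two_colourable e1 -> two_colourable e2 -> two_colourable shift_union.
Proof.
move=> [c1 ce1] [c2 ce2]; exists (fun u => if u < w then c1 u else c2 (u - w)).
move=> u v; rewrite /shift_union.
case: (ltnP u w) => hu /andP[hv].
  by rewrite hv; apply: ce1.
by rewrite ltnNge hv; apply: ce2.
Qed.

Lemma shift_union_K22_free : K22_free e1 -> K22_free e2 -> K22_free shift_union.
Proof.
move=> K1 K2 u v x x' uv xx'; rewrite /shift_union.
case: (ltnP u w) => hu; case: (ltnP v w) => hv.
- by move=> /andP[_ ux] /andP[_ ux'] /andP[_ vx] /andP[_ vx']; apply: (K1 u v x x').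
- by move=> /andP[hx _] _ /andP[hx' _]; lia.
- by move=> /andP[hx _] _ /andP[hx' _]; lia.
- move=> /andP[hx ux] /andP[hx' ux'] /andP[_ vx] /andP[_ vx'].
  by apply: (K2 (u - w) (v - w) (x - w) (x' - w)) => //; apply/eqP; lia.
Qed.

Lemma sparse_bounded_shift_union k N n1 n2 :
  sparse_bounded e1 k w n1 -> sparse_bounded e2 k N n2 ->
  sparse_bounded shift_union k (w + N) (n1 + n2).
Proof.
move=> sp1 sp2 s us /allP sN /allP ssp.
rewrite -(count_predC (fun x => x < w) s) -!size_filter; apply: leq_add.
  apply: sp1; first exact: filter_uniq.
    by apply/allP => x; rewrite mem_filter => /andP[].
  apply/allP => x; rewrite mem_filter => /andP[xw xs].
  rewrite count_filter; apply: leq_trans (ssp x xs); apply: sub_count => y /andP[exy yw].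
  by rewrite /shift_union xw yw.
rewrite -(size_map (subn^~ w)); apply: sp2.
- rewrite map_inj_in_uniq ?filter_uniq // => x y.
  by rewrite !mem_filter /= -!leqNgt => /andP[hx _] /andP[hy _]; lia.
- apply/allP => _ /mapP [x + ->]; rewrite mem_filter /= -leqNgt => /andP[hx /sN].
  lia.
- apply/allP => _ /mapP [x + ->]; rewrite mem_filter /= -leqNgt => /andP[hx xs].
  rewrite count_map count_filter; apply: leq_trans (ssp x xs).
  apply: sub_count => y /andP[exy]; rewrite /= -leqNgt => hy.
  by rewrite /shift_union ltnNge hx hy.
Qed.

End ShiftUnion.

Section Codegree.
Variables (e : rel nat) (N : nat).

Definition codegree_le1 : bool :=
  all (fun u => all (fun v => (u == v) ||
    (count (fun w => e u w && e v w) (iota 0 N) <= 1)) (iota 0 N)) (iota 0 N).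

Lemma K22_free_codegree :
  (forall u v, e u v -> (u < N) && (v < N)) -> codegree_le1 -> K22_free e.
Proof.
move=> eN /allP cd u v w w' uv ww' euw euw' evw evw'.
have /andP[uN wN] := eN _ _ euw; have /andP[vN w'N] := eN _ _ evw'.
have /allP/(_ v) := cd u ltac:(by rewrite mem_iota).
rewrite mem_iota (negbTE uv) /= => /(_ vN); apply/negP; rewrite -ltnNge.
by apply: (count_gt1 (x := w) (y := w')); rewrite ?mem_iota ?euw ?evw ?euw' ?evw'.
Qed.

End Codegree.

Fixpoint subseqs (T : Type) (l : seq T) : seq (seq T) :=
  if l is x :: l' then let r := subseqs l' in r ++ map (cons x) r else [:: [::]].

Lemma mem_subseqs (T : eqType) (l s : seq T) : subseq s l -> s \in subseqs l.
Proof.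
elim: l s => [|x l IH] [|y s] //=.
- by move=> _; rewrite mem_cat IH ?sub0seq.
- case: ifP => [/eqP -> | _] h; rewrite mem_cat.
  + by apply/orP; right; rewrite mem_map ?IH //; move=> ? ? [].
  + by rewrite IH.
Qed.

Section PrivateNeighbours.
Variables (e : rel nat) (t : nat).
Hypothesis e_sym : symmetric e.

Definition nbr_count (X : seq nat) (y : nat) : nat := count (e^~ y) X.

(* Vertices below [t] are on the left, those in [t, 2t) on the right.  In a
   1-sparse set with left part [X], a right vertex has at most one neighbour in
   [X], and distinct right vertices with a neighbour in [X] have distinct ones,
   each of which then has a "private" neighbour [y] with [nbr_count X y = 1]. *)
Definition sparse_set_bound (X : seq nat) : nat :=
  let R := iota t t in
  let P := [seq y <- R | nbr_count X y == 1] in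
  size X + count (fun y => nbr_count X y == 0) R + count (fun x => has (e x) P) X.

Lemma sparse_set_bound_perm X X' : perm_eq X X' -> sparse_set_bound X = sparse_set_bound X'.
Proof.
move=> pXX'; have nbrX y : nbr_count X y = nbr_count X' y by exact: (permP pXX').
rewrite /sparse_set_bound /= (perm_size pXX') (permP pXX').
congr (_ + _ + _); first by apply: eq_count => y; rewrite nbrX.
by apply: eq_count => x; congr (has _ _); apply: eq_filter => y; rewrite nbrX.
Qed.

Section SparseSeq.
Variable s : seq nat.
Hypotheses (s_uniq : uniq s) (s_lt : all (fun x => x < t + t) s)
  (s_sparse : k_sparse_seq e 1 s).

Local Notation X := [seq x <- s | x < t].
Local Notation Y := [seq y <- s | predC (fun x => x < t) y].
Local Notation matched y := (nbr_count X y != 0).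

Lemma nbr_count_le1 y : y \in s -> nbr_count X y <= 1.
Proof.
move=> ys; apply: leq_trans (allP s_sparse y ys); rewrite /nbr_count count_filter.
by apply: sub_count => x /andP[]; rewrite e_sym.
Qed.

Let mate y := nth 0 X (find (e^~ y) X).

Lemma mateP y : y \in s -> matched y -> [/\ mate y \in X, e (mate y) y & nbr_count X y == 1].
Proof.
move=> ys; rewrite -lt0n /nbr_count -has_count => hasX; split.
- by rewrite mem_nth -?has_find.
- exact: (nth_find 0 hasX).
- by rewrite eqn_leq nbr_count_le1 // /nbr_count -has_count.
Qed.

Lemma count_matched_le : count (fun y => matched y) Y <=
  count (fun x => has (e x) [seq y <- iota t t | nbr_count X y == 1]) X.
Proof.
rewrite -!size_filter -(size_map mate); apply: uniq_leq_size.
  rewrite map_inj_in_uniq ?filter_uniq // => y1 y2.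
  rewrite !mem_filter => /and3P[m1 _ y1s] /and3P[m2 _ y2s] eq12.
  apply/eqP/negPn/negP => ne.
  have [mX1 e1 _] := mateP y1s m1; have [_ e2 _] := mateP y2s m2; rewrite -eq12 in e2.
  have ms : mate y1 \in s by move: mX1; rewrite mem_filter => /andP[].
  by have := allP s_sparse _ ms; rewrite leqNgt (count_gt1 y1s y2s ne e1 e2).
move=> _ /mapP [y + ->]; rewrite (mem_filter _ _ Y) mem_filter => /and3P[my ty ys].
have [mX emy ny] := mateP ys my.
rewrite mem_filter mX andbT; apply/hasP; exists y => //.
by rewrite mem_filter ny mem_iota /= (allP s_lt y ys) andbT leqNgt.
Qed.

Lemma size_le_sparse_set_bound : size s <= sparse_set_bound X.
Proof.
rewrite -(count_predC (fun x => x < t) s) -!size_filter /sparse_set_bound -addnA leq_add2l.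
rewrite -(count_predC (fun y => nbr_count X y == 0)) leq_add ?count_matched_le //.
apply: count_le_uniq_sub; first exact: filter_uniq.
by move=> y; rewrite mem_filter mem_iota /= -leqNgt => /andP[-> /(allP s_lt)].
Qed.

End SparseSeq.

Definition sparse_check : bool :=
  all (fun X => sparse_set_bound X <= t) (subseqs (iota 0 t)).

Lemma sparse_bounded_check : sparse_check -> sparse_bounded e 1 (t + t) t.
Proof.
move=> /allP chk s us s2t sp1; apply: leq_trans (size_le_sparse_set_bound us s2t sp1) _.
rewrite (@sparse_set_bound_perm _ [seq x <- iota 0 t | x \in s]).
  by apply: chk; apply: mem_subseqs; exact: filter_subseq.
apply: uniq_perm; rewrite ?filter_uniq ?iota_uniq // => x.
by rewrite !mem_filter mem_iota andbC.
Qed.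

End PrivateNeighbours.

Definition incidence_graph (L : seq (seq nat)) : rel nat := fun u v =>
  let t := size L in
  let incident a p := (a < t) && (t <= p < t + t) && (p - t \in nth [::] L a) in
  incident u v || incident v u.

Lemma incidence_graph_sym L : symmetric (incidence_graph L).
Proof. by move=> u v; rewrite /incidence_graph orbC. Qed.

Lemma incidence_graph_irr L : irreflexive (incidence_graph L).
Proof. by move=> u; rewrite /incidence_graph orbb; case: ltnP => //= /leq_gtF ->. Qed.

Lemma incidence_graph_colourable L : two_colourable (incidence_graph L).
Proof.
exists (fun u => u < size L) => u v /orP[] /andP[] /andP[hu /andP[hv _]] _;
  by rewrite hu ltnNge hv.
Qed.

Lemma incidence_graph_lt L u v :
  incidence_graph L u v -> (u < size L + size L) && (v < size L + size L).
Proof. by case/orP => /andP[] /andP[hu /andP[_ hv]] _; lia. Qed.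

Definition fano : seq (seq nat) :=
  [:: [:: 0; 1; 3]; [:: 1; 2; 4]; [:: 2; 3; 5]; [:: 3; 4; 6]; [:: 0; 4; 5]; [:: 1; 5; 6];
      [:: 0; 2; 6]].

Definition mobius_kantor : seq (seq nat) :=
  [:: [:: 0; 1; 2]; [:: 1; 3; 4]; [:: 2; 4; 5]; [:: 1; 5; 6]; [:: 0; 3; 6]; [:: 3; 5; 7];
      [:: 0; 4; 7]; [:: 2; 6; 7]].

(* PG(2,3) with a point and a line not through it removed. *)
Definition pg23_antiflag : seq (seq nat) :=
  [:: [:: 3; 4; 5]; [:: 2; 3; 8; 10]; [:: 1; 3; 7; 11]; [:: 0; 1; 2]; [:: 0; 5; 8; 11];
      [:: 0; 4; 7; 10]; [:: 9; 10; 11]; [:: 2; 5; 7; 9]; [:: 1; 4; 8; 9]; [:: 6; 7; 8];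
      [:: 1; 5; 6; 10]; [:: 2; 4; 6; 11]].

Definition pg23 : seq (seq nat) :=
  [:: [:: 1; 4; 7; 10]; [:: 0; 4; 5; 6]; [:: 3; 4; 9; 11]; [:: 2; 4; 8; 12]; [:: 0; 1; 2; 3];
      [:: 1; 6; 9; 12]; [:: 1; 5; 8; 11]; [:: 0; 10; 11; 12]; [:: 3; 6; 8; 10];
      [:: 2; 5; 9; 10]; [:: 0; 7; 8; 9]; [:: 2; 6; 7; 11]; [:: 3; 5; 7; 12]].

Definition good_block (L : seq (seq nat)) : bool :=
  codegree_le1 (incidence_graph L) (size L + size L) &&
  sparse_check (incidence_graph L) (size L).

Definition blocks : seq (seq (seq nat)) := [:: fano; mobius_kantor; pg23_antiflag; pg23].

Lemma good_blocks : all good_block blocks.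
Proof. by vm_compute. Qed.

Definition union_graph (Ls : seq (seq (seq nat))) : rel nat :=
  foldr (fun L => shift_union (size L + size L) (incidence_graph L)) (fun _ _ => false) Ls.

Definition total (Ls : seq (seq (seq nat))) : nat := sumn (map size Ls).

Lemma union_graph_simple Ls : irreflexive (union_graph Ls) /\ symmetric (union_graph Ls).
Proof.
elim: Ls => [|L Ls [irr sym]] //=.
split; first exact: shift_union_irr (@incidence_graph_irr L) irr.
exact: shift_union_sym (@incidence_graph_sym L) sym.
Qed.

Lemma union_graph_colourable Ls : two_colourable (union_graph Ls).
Proof.
elim: Ls => [|L Ls col]; first by exists xpredT.
exact: shift_union_colourable (incidence_graph_colourable L) col.
Qed.

Lemma union_graph_K22_free Ls : all good_block Ls -> K22_free (union_graph Ls).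
Proof.
elim: Ls => [|L Ls IH] //= /andP[/andP[cdL _] /IH K22]; apply: shift_union_K22_free K22.
exact: K22_free_codegree (@incidence_graph_lt L) cdL.
Qed.

Lemma union_graph_sparse_bounded Ls :
  all good_block Ls -> sparse_bounded (union_graph Ls) 1 (total Ls + total Ls) (total Ls).
Proof.
elim: Ls => [|L Ls IH] /=; first by move=> _ [|x s] // _ /andP[].
move=> /andP[/andP[_ spL] /IH spLs]; rewrite /total /= -/(total Ls) addnACA.
apply: sparse_bounded_shift_union spLs.
exact: sparse_bounded_check (@incidence_graph_sym L) spL.
Qed.

(* The total sizes 0, 8, 16, 24, 25, 12, 13 are congruent to [r] modulo 7;
   the rest of [n] is filled up with Fano planes. *)
Definition residue_blocks (r : nat) : seq (seq (seq nat)) :=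
  match r with
  | 0 => [::]
  | 1 => [:: mobius_kantor]
  | 2 => [:: mobius_kantor; mobius_kantor]
  | 3 => [:: mobius_kantor; mobius_kantor; mobius_kantor]
  | 4 => [:: pg23_antiflag; pg23]
  | 5 => [:: pg23_antiflag]
  | _ => [:: pg23]
  end.

Definition block_decomposition (n : nat) : seq (seq (seq nat)) :=
  let R := residue_blocks (n %% 7) in nseq ((n - total R) %/ 7) fano ++ R.

Lemma block_decomposition_blocks n : all (mem blocks) (block_decomposition n).
Proof.
rewrite all_cat all_nseq; apply/andP; split; first by apply/orP; right.
by case: (n %% 7) => [|[|[|[|[|[|r]]]]]].
Qed.

Lemma total_block_decomposition n :
  (14 <= n <= 16) || (19 <= n) -> total (block_decomposition n) = n.
Proof.
rewrite /block_decomposition /total map_cat sumn_cat map_nseq sumn_nseq => hn.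
have := ltn_pmod n (isT : 0 < 7).
by case hr: (n %% 7) => [|[|[|[|[|[|r]]]]]] /= _; lia.
Qed.

Lemma k_sparse_relpre_val m (e : rel nat) k (S : {set 'I_m}) :
  k_sparse (relpre val e) k S -> k_sparse_seq e k (map val (enum S)).
Proof.
move=> /forall_inP sp; apply/allP => _ /mapP [x + ->]; rewrite mem_enum => xS.
by rewrite count_map -card_set_count; exact: sp.
Qed.

Lemma not_bip_ramsey_prop (e : rel nat) n m N :
  irreflexive e -> symmetric e -> two_colourable e -> K22_free e ->
  sparse_bounded e 1 N n -> m <= N -> ~ bip_ramsey_prop 1 4 n.+1 m.
Proof.
move=> irr sym [c ce] K22 spN mN ramsey.
pose g : rel 'I_m := relpre val e.
have simple : simple_graph g by split=> [x | x y]; [exact: irr | exact: sym].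
have bip : bipartite g by exists (c \o val) => x y /ce.
have K22' : K22_free g.
  by move=> u v w w' uv ww'; apply: K22; rewrite (inj_eq val_inj).
case: (ramsey g simple bip) => [[S [S4 dS]] | [S [Sn sS]]].
  by move: dS; apply/negP; apply: bipartite_4set_not_1_dense.
suff : n.+1 <= n by rewrite ltnn.
rewrite -Sn cardE -(size_map val); apply: spN.
- by rewrite map_inj_uniq ?enum_uniq //; exact: val_inj.
- by apply/allP => _ /mapP [x _ ->]; exact: leq_trans (ltn_ord x) mN.
- exact: k_sparse_relpre_val.
Qed.

Lemma bip_ramsey_prop_lower n m :
  (14 <= n <= 16) || (19 <= n) -> m <= n + n -> ~ bip_ramsey_prop 1 4 n.+1 m.
Proof.
move=> hn mn; have [irr sym] := union_graph_simple (block_decomposition n).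
have good : all good_block (block_decomposition n).
  by apply/allP => L /(allP (block_decomposition_blocks n)) /(allP good_blocks).
have := union_graph_sparse_bounded good; rewrite total_block_decomposition // => sp.
exact: not_bip_ramsey_prop irr sym (union_graph_colourable _) (union_graph_K22_free good) sp mn.
Qed.

Theorem theorem5p4 (j : nat) (hj : (20 <= j) \/ (j = 15 \/ j = 16 \/ j = 17)) :
  is_bip_ramsey 1 4 j (2 * j - 1).
Proof.
split=> [|m ltm]; first exact: bip_ramsey_prop_upper.
have -> : j = j.-1.+1 by lia.
by apply: bip_ramsey_prop_lower; lia.
Qed.
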